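(* Let $\alpha\in\mathbb{R}$, $\gamma>0$, and let $\mu$ be a positive Borel measure on $[0,1)$ with moments $\mu_n=\int_{[0,1)}t^n\,d\mu(t)$. Suppose there is $\varepsilon>0$ such that $\mu_n=\mathcal{O}\big(n^{-(\frac{\alpha}{2}+\varepsilon)}\big)$ as $n\to\infty$. Then the generalized Hilbert operator $\mathcal{H}_{\mu,\gamma}$ is well defined on $\mathcal{D}_\alpha$, i.e. for every $f(z)=\sum_{k=0}^\infty a_kz^k\in\mathcal{D}_\alpha$ and every $n\ge 0$ the series $\sum_{k=0}^{\infty}\mu_{n+k}a_k$ converges.
   Context: $\mathbb{D}$ is the open unit disc. For $\alpha\in\mathbb{R}$, the Dirichlet-type space $\mathcal{D}_\alpha$ consists of analytic $f(z)=\sum_{n\ge0}a_nz^n$ on $\mathbb{D}$ with $\|f\|_{\mathcal{D}_\alpha}^2=\sum_{n=0}^\infty (n+1)^{1-\alpha}|a_n|^2<\infty$. For a positive Borel measure $\mu$ on $[0,1)$ and $\gamma>0$, the generalized Hilbert operator is defined on analytic $f(z)=\sum_k a_kz^k$ by $\mathcal{H}_{\mu,\gamma}(f)(z)=\sum_{n=0}^\infty\Big(\sum_{k=0}^\infty \mu_{n+k}a_k\Big)\frac{\Gamma(n+\gamma)}{n!\,\Gamma(\gamma)}z^n$, where $\mu_j=\int_{[0,1)}t^j\,d\mu(t)$. *)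

From HB Require Import structures.
From mathcomp Require Import all_boot all_order all_algebra.
From mathcomp Require Import all_classical all_reals all_analysis.
From mathcomp Require Import complex.
Set Implicit Arguments. Unset Strict Implicit. Unset Printing Implicit Defensive.
Import Order.TTheory GRing.Theory Num.Theory.
Import numFieldNormedType.Exports.
Local Open Scope classical_set_scope.
Local Open Scope ring_scope.

(* n-th moment  mu_n = \int_{[0,1)} t^n dmu(t)  (real-valued; finite under the
   hypothesis mu [0,1) < +oo used in the theorem). *)
Definition moment (R : realType) (mu : {measure set (measurableTypeR R) -> \bar R})
  (n : nat) : R :=
  fine (\int[mu]_(t in `[0%R, 1%R[) ((t ^+ n)%:E))%E.

(* The complex numbers over R, viewed as a numFieldType so that it carries its
   canonical (modulus) normed/topological structure from MathComp-Analysis. *)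
Definition Cplx (R : realType) : numFieldType := R[i].

Definition csqnorm (R : realType) (z : R[i]) : R := (Normc.normc z) ^+ 2.

(* f(z) = sum a_n z^n belongs to D_alpha:
   sum_n (n+1)^(1-alpha) |a_n|^2 < oo  (series of nonnegative reals converges) *)
Definition in_Dalpha (R : realType) (alpha : R) (a : nat -> Cplx R) : Prop :=
  cvgn (series (fun n : nat => (n.+1%:R `^ (1 - alpha)) * csqnorm (a n))).

From HB Require Import structures.
From mathcomp Require Import all_boot all_order all_algebra.
From mathcomp Require Import all_classical all_reals all_analysis.
From mathcomp Require Import complex ring lra zify.
Set Implicit Arguments.
Unset Strict Implicit.
Unset Printing Implicit Defensive.

Import Order.TTheory GRing.Theory Num.Theory.
Import numFieldNormedType.Exports.
Local Open Scope classical_set_scope.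
Local Open Scope ring_scope.

(* Since (n + k) / (k + 1) stays in [1/2, n + 1], the decay hypothesis
   gives |mu_(n+k)| <= D (k+1)^-(alpha/2+eps) for large k. With the weight
   w_k = (k+1)^(1-alpha), the weighted AM-GM inequality yields
     |mu_(n+k) a_k| <= (w_k |a_k|^2 + |mu_(n+k)|^2 / w_k) / 2
                    <= (w_k |a_k|^2 + D^2 (k+1)^-(1+2 eps)) / 2,
   a sum of the D_alpha series of f and a convergent p-series. Hence the series
   converges absolutely, and an absolutely convergent complex series converges
   because its real and imaginary parts do. *)

Section real_series.
Variable R : realType.
Implicit Types (x y d a : R).

Lemma powRN_ge1DB y d : 0 < y -> 0 <= d -> 1 + d * (1 - y) <= y `^ (- d).
Proof.
move=> y0 d0; rewrite /powR gt_eqF //; apply: le_trans (expR_ge1Dx _).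
rewrite lerD2l mulNr -mulrN ler_wpM2l //.
have : ln y <= y - 1.
  by move: (@le_ln1Dx _ (y - 1)); rewrite [1 + _]addrC subrK; apply; lra.
lra.
Qed.

Lemma riemannR_le_powR_decrement x d : 0 < x -> 0 < d ->
  d * ((x + 1) `^ (1 + d))^-1 <= x `^ (- d) - (x + 1) `^ (- d).
Proof.
move=> x0 d0; have x10 : 0 < x + 1 by lra.
set y := x / (x + 1).
have y0 : 0 < y by rewrite divr_gt0.
have -> : x `^ (- d) = (x + 1) `^ (- d) * y `^ (- d).
  by rewrite -powRM ?ltW // /y mulrC divfK ?gt_eqF.
have -> : ((x + 1) `^ (1 + d))^-1 = (x + 1) `^ (- d) / (x + 1).
  rewrite -powRN opprD powRD; last by rewrite (gt_eqF x10) implybT.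
  by rewrite powR_inv1 ?ltW // mulrC.
have : 1 + d / (x + 1) <= y `^ (- d).
  have -> : (x + 1)^-1 = 1 - y by rewrite /y; field; rewrite gt_eqF.
  exact: powRN_ge1DB y0 (ltW d0).
have := powR_gt0 (- d) x10.
nra.
Qed.

Lemma is_cvg_series_riemannR a : 1 < a -> cvgn (series (riemannR a)).
Proof.
move=> a1; set d := a - 1; have d0 : 0 < d by rewrite subr_gt0.
have r0 k : 0 <= riemannR a k by rewrite /riemannR invr_ge0 powR_ge0.
apply: nondecreasing_is_cvgn.
  by apply: (nondecreasing_series (P := xpredT) (m := 0%N)) => k.
exists (1 + d^-1) => _ [[|m] _ <-].
  have : 0 < d^-1 by rewrite invr_gt0.
  by rewrite /series /= big_geq //; lra.
pose h k := (k.+1%:R : R) `^ (- d).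
have step k : riemannR a k.+1 <= (h k - h k.+1) / d.
  rewrite ler_pdivlMr // mulrC /h /riemannR -(@natr1 R k.+1) -(@natr1 R k).
  have -> : a = 1 + d by rewrite /d; lra.
  by apply: riemannR_le_powR_decrement; rewrite // ltr_wpDl.
rewrite /series /= big_nat_recl // /riemannR powR1 invr1 lerD2l.
apply: le_trans; first by apply: ler_sum_nat => k _; exact: step.
rewrite /= -mulr_suml.
under eq_bigr do rewrite -opprB.
rewrite sumrN telescope_sumr // /h powR1 opprB -[leRHS]mul1r.
by rewrite ler_wpM2r ?invr_ge0 ?ltW // lerBlDr lerDl powR_ge0.
Qed.

Lemma series_le_cvg_from (K : nat) (u v : R ^nat) :
  (forall k, 0 <= u k) -> (forall k, (K <= k)%N -> u k <= v k) ->
  cvgn (series v) -> cvgn (series u).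
Proof.
move=> u0 uv /cvg_seq_bounded/bounded_fun_has_ubound[M vM].
have u_nd : nondecreasing_seq (series u).
  by apply: (nondecreasing_series (P := xpredT) (m := 0%N)) => k.
apply: nondecreasing_is_cvgn => //.
exists (series u K + M - series v K) => _ [n _ <-].
set m := maxn n K; have Km : (K <= m)%N := leq_maxr n K.
apply: le_trans (u_nd _ _ (leq_maxl n K)) _.
have := sub_series_geq u Km; have := sub_series_geq v Km.
have : \sum_(K <= k < m) u k <= \sum_(K <= k < m) v k.
  by apply: ler_sum_nat => k /andP[Kk _]; exact: uv.
have := vM (series v m) (ex_intro2 _ _ m I erefl).
lra.
Qed.

Lemma mul_le_halfD_sqr x y w : 0 < w -> x * y <= (w * x ^+ 2 + y ^+ 2 / w) / 2.
Proof.
move=> w0; have : 0 <= (w * x - y) ^+ 2 / w by rewrite divr_ge0 ?sqr_ge0 ?ltW.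
have -> : (w * x - y) ^+ 2 / w = w * x ^+ 2 - 2 * (x * y) + y ^+ 2 / w.
  by field; rewrite gt_eqF.
lra.
Qed.

Lemma powR_le_endpoints p x a b : 0 < a -> a <= x <= b ->
  x `^ p <= a `^ p + b `^ p.
Proof.
move=> a0 /andP[ax xb]; have x0 : 0 < x by apply: lt_le_trans ax.
have b0 : 0 < b by apply: lt_le_trans xb.
have [p0|p0] := leP 0 p.
  have : x `^ p <= b `^ p.
    by apply: ge0_ler_powR => //; rewrite nnegrE ltW.
  have := powR_ge0 a p; lra.
have : x `^ p <= a `^ p.
  have powR_opp z : z `^ p = (z `^ (- p))^-1 by rewrite -powRN opprK.
  rewrite !powR_opp lef_pV2 ?posrE ?powR_gt0 //.
  by apply: ge0_ler_powR => //; rewrite ?nnegrE ?oppr_ge0 ltW.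
have := powR_ge0 b p; lra.
Qed.

End real_series.

Section complex_series.
Variable R : realType.
Local Open Scope complex_scope.

Lemma normc_real_complex (x : R) : Normc.normc x%:C = `|x|.
Proof. by rewrite /= expr0n /= addr0 sqrtr_sqr. Qed.

Lemma normr_real_complex (x : R) : `|x%:C : Cplx R| = `|x|%:C.
Proof. by rewrite normc_def /= expr0n /= addr0 sqrtr_sqr. Qed.

Lemma cvg_real_complex (u : R ^nat) (l : R) :
  u @ \oo --> l -> ((u n)%:C : Cplx R) @[n --> \oo] --> (l%:C : Cplx R).
Proof.
move=> ul; apply/cvgrPdist_lt => e; rewrite ltcE /= => /andP[/eqP Ie0 Re0].
move/cvgrPdist_lt: ul => /(_ _ Re0); apply: filterS => n ln.
have -> : l%:C - (u n)%:C = (l - u n)%:C :> Cplx R.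
  by rewrite -(@rmorphB _ _ (real_complex R)).
by rewrite normr_real_complex ltcE Ie0 /= eqxx ln.
Qed.

Lemma is_cvg_series_complex (z : nat -> Cplx R) :
  cvgn (series (fun k => complex.Re (z k))) ->
  cvgn (series (fun k => complex.Im (z k))) ->
  cvgn (series z).
Proof.
move=> /cvg_ex[/= a za] /cvg_ex[/= b zb].
have -> : series z = fun n => (series (fun k => complex.Re (z k)) n)%:C
                               + 'i * (series (fun k => complex.Im (z k)) n)%:C.
  apply: funext => n; rewrite /series /= !rmorph_sum mulr_sumr -big_split /=.
  by apply: eq_bigr => k _; rewrite -complexE.
apply: (cvgP (a%:C + 'i * b%:C : Cplx R)).
by apply: cvgD; [|apply: cvgM; [exact: cvg_cst|]]; exact: cvg_real_complex.
Qed.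

Lemma is_cvg_series_complex_le (z : nat -> Cplx R) (u : R ^nat) :
  (forall k, Normc.normc (z k) <= u k) -> cvgn (series u) -> cvgn (series z).
Proof.
move=> zu cvg_u.
have u_ge0 k : 0 <= u k.
  by apply: le_trans (zu k); case: (z k) => ? ?; exact: sqrtr_ge0.
have Re_le k : `|complex.Re (z k)| <= u k.
  apply: le_trans (zu k).
  by case: (z k) => x y /=; rewrite -sqrtr_sqr ler_wsqrtr // lerDl sqr_ge0.
have Im_le k : `|complex.Im (z k)| <= u k.
  apply: le_trans (zu k).
  by case: (z k) => x y /=; rewrite -sqrtr_sqr ler_wsqrtr // lerDr sqr_ge0.
by apply: is_cvg_series_complex; apply: normed_cvg;
  apply: (series_le_cvg _ u_ge0 _ cvg_u) => k /=.
Qed.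

End complex_series.

Section decay_pairing.
Variable R : realType.

Lemma powR_decay_shift (s C : R) (N n : nat) (b : R ^nat) :
  (forall m, (N <= m)%N -> `|b m| <= C * m%:R `^ (- s)) ->
  forall k, (maxn N 1 <= k)%N ->
  `|b (n + k)%N|
    <= `|C| * (2^-1 `^ (- s) + n.+1%:R `^ (- s)) * k.+1%:R `^ (- s).
Proof.
move=> decay k; rewrite geq_max => /andP[Nk k1].
apply: le_trans (decay _ (leq_trans Nk (leq_addl _ _))) _.
have k1_gt0 : 0 < k.+1%:R :> R by rewrite ltr0n.
set x := (n + k)%:R / k.+1%:R : R.
have -> : (n + k)%:R = x * k.+1%:R :> R by rewrite /x divfK ?gt_eqF.
have x_bounds : 2^-1 <= x <= n.+1%:R.
  rewrite /x ler_pdivlMr // ler_pdivrMr // mulrC ler_pdivrMr ?ltr0n //.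
  rewrite -!natrM !ler_nat; apply/andP; split; lia.
have x_gt0 : 0 < x.
  by case/andP: x_bounds => + _; apply: lt_le_trans; rewrite invr_gt0.
rewrite powRM ?ler0n ?(ltW x_gt0) // mulrA ler_wpM2r ?powR_ge0 //.
apply: le_trans (ler_wpM2r (powR_ge0 _ _) (ler_norm C)) _.
by rewrite ler_wpM2l // powR_le_endpoints // invr_gt0.
Qed.

Lemma powR_sqr_div_riemannR (alpha eps : R) (k : nat) :
  (k.+1%:R `^ (- (alpha / 2 + eps))) ^+ 2 / k.+1%:R `^ (1 - alpha) =
  riemannR (1 + eps *+ 2) k.
Proof.
have k1_neq0 : k.+1%:R != 0 :> R by rewrite pnatr_eq0.
rewrite /riemannR -!powRN expr2 -!powRD ?k1_neq0 ?implybT //.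
by congr (_ `^ _); rewrite mulr2n; field.
Qed.

Lemma is_cvg_series_decay_pairing (alpha eps C : R) (N n : nat) (b c : R ^nat) :
  0 < eps ->
  (forall m, (N <= m)%N -> `|b m| <= C * m%:R `^ (- (alpha / 2 + eps))) ->
  (forall k, 0 <= c k) ->
  cvgn (series (fun k => k.+1%:R `^ (1 - alpha) * c k ^+ 2)) ->
  cvgn (series (fun k => `|b (n + k)%N| * c k)).
Proof.
move=> eps_gt0 decay c_ge0 cvg_Dalpha.
set s := alpha / 2 + eps.
set D := `|C| * (2^-1 `^ (- s) + n.+1%:R `^ (- s)).
set w := fun k : nat => k.+1%:R `^ (1 - alpha) : R.
have w_gt0 k : 0 < w k by rewrite powR_gt0 ?ltr0n.
apply: (@series_le_cvg_from _ (maxn N 1) _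
  (fun k => 2^-1 * (w k * c k ^+ 2) + D ^+ 2 / 2 * riemannR (1 + eps *+ 2) k)).
- by move=> k; rewrite mulr_ge0.
- move=> k Kk; rewrite mulrC.
  have := mul_le_halfD_sqr (c k) `|b (n + k)%N| (w_gt0 k).
  have bk := powR_decay_shift n decay Kk; rewrite -/s -/D in bk.
  have : `|b (n + k)%N| ^+ 2 / w k <= D ^+ 2 * riemannR (1 + eps *+ 2) k.
    rewrite -(powR_sqr_div_riemannR alpha) -/s mulrA -exprMn.
    rewrite ler_wpM2r ?invr_ge0 ?(ltW (w_gt0 k)) // ler_pXn2r ?nnegrE //.
    exact: le_trans (normr_ge0 _) bk.
  lra.
- apply: is_cvg_seriesD; apply: is_cvg_seriesZ => //.
  by apply: is_cvg_series_riemannR; rewrite ltrDl mulrn_wgt0.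
Qed.

End decay_pairing.

Theorem lemma2p1 (R : realType) (alpha gamma : R)
  (mu : {measure set (measurableTypeR R) -> \bar R}) :
  0 < gamma ->
  (mu [set` `[0%R, 1%R[] < +oo)%E ->
  (exists eps : R, 0 < eps /\
     exists (C : R) (N : nat), forall n : nat, (N <= n)%N ->
       `|moment mu n| <= C * (n%:R `^ (- (alpha / 2 + eps)))) ->
  forall a : nat -> Cplx R, in_Dalpha alpha a ->
  forall n : nat,
    cvgn (series (fun k : nat => ((moment mu (n + k))%:C)%C * a k :> Cplx R)).
Proof.
move=> _ _ [eps [eps_gt0 [C [N decay]]]] a a_Dalpha n.
apply: (is_cvg_series_complex_le
  (u := fun k => `|moment mu (n + k)| * Normc.normc (a k))).
  by move=> k; rewrite Normc.normcM normc_real_complex.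
have normc_ge0 k : 0 <= Normc.normc (a k).
  by case: (a k) => ? ?; exact: sqrtr_ge0.
exact: is_cvg_series_decay_pairing eps_gt0 decay normc_ge0 a_Dalpha.
Qed.
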